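(* Let $W$ be a 1-planar graph of class $\mathcal C_1$. If $W$ has at most 8 vertices, then any $\mathcal C_1$-drawing of $W$ has at most two crossings.
   Context: All graphs are finite, simple and undirected. A drawing is 1-planar if each edge is crossed at most once (adjacent edges never cross, no edge crosses itself). For a 1-planar drawing $D$, $D^\times$ is the plane graph obtained by turning each crossing into a new degree-4 vertex (a false vertex); $N_{D^\times}(c)$ is the neighbour set of a false vertex $c$. A 1-planar graph is of class $\mathcal C_0$ if it has a 1-planar drawing with $|N_{D^\times}(c_1)\cap N_{D^\times}(c_2)|=0$ for all distinct false vertices; it is of class $\mathcal C_1$ if it is not of class $\mathcal C_0$ and it has a 1-planar drawing with $|N_{D^\times}(c_1)\cap N_{D^\times}(c_2)|\le 1$ for all distinct false vertices $c_1,c_2$. A $\mathcal C_1$-drawing is a 1-planar drawing $D$ with $|N_{D^\times}(c_1)\cap N_{D^\times}(c_2)|\le 1$ for all distinct false vertices $c_1,c_2$. *)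

(* Combinatorial encoding of 1-planar drawings via the
   planarization D^x and a genus-0 rotation system (combinatorial map). *)
From mathcomp Require Import all_boot.
Set Implicit Arguments.
Unset Strict Implicit.
Unset Printing Implicit Defensive.

Section OnePlanar.
Variables (V : finType) (e : rel V).

(* A candidate drawing has k crossings; crossing i is described by
   cr i = ((a,b),(c,d)) : the edge ab crosses the edge cd. *)
Variable k : nat.
Variable cr : 'I_k -> (V * V) * (V * V).

(* vertices of the planarization D^x : true vertices and false vertices *)
Definition pvert := (V + 'I_k)%type.

Definition crosses_edge (i : 'I_k) (u v : V) : bool :=
  let: ((a, b), (c, d)) := cr i in
  (u, v) \in [:: (a, b); (b, a); (c, d); (d, c)].

Definition cr_endpoint (i : 'I_k) (u : V) : bool :=
  let: ((a, b), (c, d)) := cr i in u \in [:: a; b; c; d].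

Definition padj (p q : pvert) : bool :=
  match p, q with
  | inl u, inl v => e u v && ~~ [exists i, crosses_edge i u v]
  | inl u, inr i => cr_endpoint i u
  | inr i, inl u => cr_endpoint i u
  | inr _, inr _ => false
  end.

Lemma padj_sym (p q : pvert) : (e =2 fun x y => e y x) ->
  padj p q -> padj q p.
Proof.
move=> es; case: p => [u|i]; case: q => [v|j] //=.
rewrite es => /andP[-> H]; apply/negP => /existsP[i Hi]; apply: (negP H).
apply/existsP; exists i; move: Hi; rewrite /crosses_edge.
case: (cr i) => [[a b] [c d]]; rewrite !inE !xpair_eqE.
by move=> /or4P[] /andP[-> ->]; rewrite ?eqxx ?orbT.
Qed.

Definition dart := {pq : pvert * pvert | padj pq.1 pq.2}.

Definition dtail (d : dart) : pvert := (val d).1.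

Definition crossings_ok : Prop :=
  (forall i, let: ((a, b), (c, d)) := cr i in
     [/\ e a b, e c d & uniq [:: a; b; c; d]]) /\
  (forall i j u v, crosses_edge i u v -> crosses_edge j u v -> i = j).

Section Map.
Variable rev : dart -> dart.
Variable rho : dart -> dart.

Definition rotation_ok : Prop :=
  [/\ injective rho,
      forall d, dtail (rho d) = dtail d &
      forall d d', dtail d = dtail d' -> fconnect rho d d'].

(* at each false vertex the two edges really cross: consecutive darts around
   a false vertex belong to different crossing edges *)
Definition alternating : Prop :=
  forall (d : dart) (i : 'I_k) (u v : V),
    val d = (inr i, inl u) -> val (rho d) = (inr i, inl v) ->
    ~~ crosses_edge i u v.

(* Euler's formula V - E + F = 2 C (genus 0 on every component);
   faces are the orbits of rho \o rev *)
Definition genus0 : Prop :=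
  fcard rho (@predT dart) + fcard (rho \o rev) (@predT dart) =
  fcard rev (@predT dart) +
  2 * n_comp (fun x y : dart => (y == rev x) || (y == rho x)) (@predT dart).

End Map.

End OnePlanar.

Definition drev (V : finType) (e : rel V) (es : e =2 fun x y => e y x)
  (k : nat) (cr : 'I_k -> (V * V) * (V * V)) (d : dart e cr) : dart e cr :=
  exist _ ((val d).2, (val d).1) (padj_sym es (valP d)).

Definition one_planar_drawing (V : finType) (e : rel V)
  (es : e =2 fun x y => e y x) (k : nat) (cr : 'I_k -> (V * V) * (V * V))
  : Prop :=
  crossings_ok e cr /\
  exists rho : dart e cr -> dart e cr,
    [/\ rotation_ok rho, alternating rho & genus0 (drev es (cr:=cr)) rho].

Definition false_nbhd (V : finType) (e : rel V) (k : nat)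
  (cr : 'I_k -> (V * V) * (V * V)) (i : 'I_k) : {set pvert V k} :=
  [set p | padj e cr (inr i) p].

Definition C0_property (V : finType) (e : rel V) (k : nat)
  (cr : 'I_k -> (V * V) * (V * V)) : Prop :=
  forall i j : 'I_k, i != j ->
    #|false_nbhd e cr i :&: false_nbhd e cr j| = 0.

Definition C1_property (V : finType) (e : rel V) (k : nat)
  (cr : 'I_k -> (V * V) * (V * V)) : Prop :=
  forall i j : 'I_k, i != j ->
    #|false_nbhd e cr i :&: false_nbhd e cr j| <= 1.

Definition C1_drawing (V : finType) (e : rel V)
  (es : e =2 fun x y => e y x) (k : nat) (cr : 'I_k -> (V * V) * (V * V))
  : Prop :=
  one_planar_drawing es cr /\ C1_property e cr.

Definition class_C0 (V : finType) (e : rel V)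
  (es : e =2 fun x y => e y x) : Prop :=
  exists (k : nat) (cr : 'I_k -> (V * V) * (V * V)),
    one_planar_drawing es cr /\ C0_property e cr.

Definition class_C1 (V : finType) (e : rel V)
  (es : e =2 fun x y => e y x) : Prop :=
  ~ class_C0 es /\
  exists (k : nat) (cr : 'I_k -> (V * V) * (V * V)), C1_drawing es cr.

(* Every crossing has exactly four (true) neighbours in the planarization, and in
   a C1-drawing two crossings share at most one of them.  Three crossings would
   therefore have at least 3 * 4 - 3 = 9 distinct neighbours, which is
   impossible with at most 8 vertices. *)
From mathcomp Require Import all_boot.
From mathcomp Require Import zify.

Lemma false_nbhdE (V : finType) (e : rel V) (k : nat)
  (cr : 'I_k -> (V * V) * (V * V)) (i : 'I_k) :
  false_nbhd e cr i = inl @: [set x | cr_endpoint cr i x].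
Proof.
apply/setP => -[u|j]; rewrite inE /=.
- apply/idP/imsetP => [cu|[x + [->]]]; last by rewrite inE.
  by exists u; rewrite ?inE.
- by apply/esym/negbTE/imsetP => -[].
Qed.

Lemma card_false_nbhd (V : finType) (e : rel V) (k : nat)
  (cr : 'I_k -> (V * V) * (V * V)) (i : 'I_k) :
  crossings_ok e cr -> #|false_nbhd e cr i| = 4.
Proof.
move=> [ok _]; rewrite false_nbhdE card_imset; last by move=> x y [].
move: (ok i); rewrite /cr_endpoint; case: (cr i) => [[a b] [c d]] [_ _ uabcd].
rewrite -[4]/(size [:: a; b; c; d]) -(card_uniqP uabcd).
by apply: eq_card => x; rewrite inE.
Qed.

Lemma false_nbhd_sub_inl (V : finType) (e : rel V) (k : nat)
  (cr : 'I_k -> (V * V) * (V * V)) (i : 'I_k) :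
  false_nbhd e cr i \subset [set inl x | x : V].
Proof.
rewrite false_nbhdE; apply/subsetP => _ /imsetP[x _ ->].
by apply/imsetP; exists x.
Qed.

Lemma leq_cards3_setU (T : finType) (A B C : {set T}) :
  #|A| + #|B| + #|C| <= #|A :|: B :|: C| + #|A :&: B| + #|A :&: C| + #|B :&: C|.
Proof.
have UAB := cardsUI A B.
have UABC := cardsUI (A :|: B) C.
have UACBC := cardsUI (A :&: C) (B :&: C).
rewrite -setIUl in UACBC.
lia.
Qed.

Lemma C1_three_crossings_card (V : finType) (e : rel V) (k : nat)
  (cr : 'I_k -> (V * V) * (V * V)) (i j l : 'I_k) :
  crossings_ok e cr -> C1_property e cr ->
  i != j -> i != l -> j != l -> 9 <= #|V|.
Proof.
move=> ok c1 ij il jl.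
have := @leq_cards3_setU _ (false_nbhd e cr i) (false_nbhd e cr j)
  (false_nbhd e cr l).
rewrite !card_false_nbhd //.
have := c1 _ _ ij; have := c1 _ _ il; have := c1 _ _ jl.
have cardU : #|false_nbhd e cr i :|: false_nbhd e cr j :|: false_nbhd e cr l|
    <= #|V|.
  apply: (@leq_trans #|[set inl x | x : V]|); last exact: leq_imset_card.
  by apply: subset_leq_card; rewrite !subUset !false_nbhd_sub_inl.
lia.
Qed.

Theorem lemma2 (V : finType) (e : rel V)
  (es : e =2 fun x y => e y x) (eirr : irreflexive e) :
  class_C1 es -> #|V| <= 8 ->
  forall (k : nat) (cr : 'I_k -> (V * V) * (V * V)),
    C1_drawing es cr -> k <= 2.
Proof.
move=> _ V8 k cr [[ok _] c1]; rewrite leqNgt; apply/negP => k3.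
have := @C1_three_crossings_card _ _ _ cr (Ordinal (ltn_trans (isT : 0 < 2) k3))
  (Ordinal (ltn_trans (isT : 1 < 2) k3)) (Ordinal k3) ok c1 isT isT isT.
by rewrite leqNgt ltnS V8.
Qed.
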